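(* For integers $4<m\le n$, the algebra $\mathtt{A}_n^{\{3,m\}}$ is wild.
   Context: $\Bbbk$ is an algebraically closed field; arrows compose right to left. $\mathtt{A}_n$ is the algebra of the quiver with vertices $1,\dots,n$, arrows $a_i:i\to i+1$, $b_i:i+1\to i$ ($1\le i\le n-1$), relations $a_ib_i=b_{i+1}a_{i+1}$ ($1\le i\le n-2$), $a_{n-1}b_{n-1}=0$. For $X\subset\{2,\dots,n\}$, $e_X$ is the sum of primitive idempotents for vertices in $\{1\}\cup X$ and $\mathtt{A}_n^X=e_X\mathtt{A}_ne_X$. *)

From mathcomp Require Import all_boot all_order all_algebra.
From mathcomp Require Import mxtens.
Set Implicit Arguments.
Unset Strict Implicit.
Unset Printing Implicit Defensive.
Import GRing.Theory.
Local Open Scope ring_scope.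

(* The quiver of A_n.  Vertices are the natural numbers 1..n.          *)
(* An arrow is a pair (dir, i) with 1 <= i <= n-1:                     *)
(*   (true,  i) = a_i : i -> i+1,                                      *)
(*   (false, i) = b_i : i+1 -> i.                                      *)
(* A path is given by its starting vertex and the list of its arrows   *)
(* in the order in which they are traversed (so the path written      *)
(* alpha_k ... alpha_1 with right-to-left composition is stored as     *)
(* [:: alpha_1; ...; alpha_k]).  The trivial path e_x is (x, [::]).    *)

Definition arrow := (bool * nat)%type.

Definition arr_src (al : arrow) : nat := if al.1 then al.2 else al.2.+1.
Definition arr_tgt (al : arrow) : nat := if al.1 then al.2.+1 else al.2.

Definition arrow_of (n : nat) (al : arrow) : bool := (1 <= al.2 <= n.-1)%N.

Fixpoint path_end (x : nat) (p : seq arrow) : nat :=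
  if p is al :: p' then path_end (arr_tgt al) p' else x.

Fixpoint wf_path (n : nat) (x : nat) (p : seq arrow) : bool :=
  if p is al :: p' then
    [&& arrow_of n al, arr_src al == x & wf_path n (arr_tgt al) p']
  else (1 <= x <= n)%N.

Definition a_ (i : nat) : arrow := (true, i).
Definition b_ (i : nat) : arrow := (false, i).

(* The defining relations of A_n, each given as (vertex s at which the *)
(* relation is a loop, list of (coefficient, path from s to s)).       *)
(*  a_i b_i - b_{i+1} a_{i+1}  (1 <= i <= n-2), a loop at i+1;          *)
(*  a_{n-1} b_{n-1},          a loop at n.                             *)
(* (a_i b_i means: first b_i, then a_i.)                               *)
Definition relations (R : pzRingType) (n : nat)
  : seq (nat * seq (R * seq arrow)) :=
  [seq (i.+1, [:: (1, [:: b_ i; a_ i]); (-1, [:: a_ i.+1; b_ i.+1])])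
     | i <- iota 1 (n - 2)]
  ++ [:: (n, [:: (1, [:: b_ n.-1; a_ n.-1])])].

(* Finite-dimensional (left) modules over A_n^X = e_X A_n e_X,         *)
(* where V = {1} u X.  Since e_X A_n e_X = e_X kQ e_X / e_X I e_X has  *)
(* the paths of Q with both endpoints in V as a spanning set (of       *)
(* e_X kQ e_X), a d-dimensional module is the same as a function rho   *)
(* assigning a d x d matrix to every such path, which is multiplicative *)
(* (with rho(p)rho(q) = 0 for non-composable p, q), unital             *)
(* (sum_{x in V} rho(e_x) = 1) and kills e_X I e_X, which is spanned   *)
(* by the elements  u r v  with r a defining relation and u, v paths   *)
(* such that u r v starts and ends in V.                               *)

Definition Vset (X : seq nat) : seq nat := 1%N :: X.

Definition epath (n : nat) (X : seq nat) (x : nat) (p : seq arrow) : bool :=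
  [&& wf_path n x p, x \in Vset X & path_end x p \in Vset X].

Definition is_module (R : pzRingType) (n : nat) (X : seq nat) (d : nat)
  (rho : nat -> seq arrow -> 'M[R]_d) : Prop :=
  [/\ \sum_(x <- undup (Vset X)) rho x [::] = 1%:M,
      (forall x q y p, epath n X x q -> epath n X y p ->
         rho y p *m rho x q =
           if path_end x q == y then rho x (q ++ p) else 0)
    & (forall s rel, (s, rel) \in relations R n ->
       forall x v u, wf_path n x v -> path_end x v = s ->
         wf_path n s u -> x \in Vset X -> path_end s u \in Vset X ->
         \sum_(c <- rel) c.1 *: rho x (v ++ c.2 ++ u) = 0)].

Definition module_iso (R : pzRingType) (n : nat) (X : seq nat)
  (d1 : nat) (rho1 : nat -> seq arrow -> 'M[R]_d1)
  (d2 : nat) (rho2 : nat -> seq arrow -> 'M[R]_d2) : Prop :=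
  exists (P : 'M[R]_(d1, d2)) (Q : 'M[R]_(d2, d1)),
    [/\ P *m Q = 1%:M, Q *m P = 1%:M &
        forall x p, epath n X x p -> rho1 x p *m P = P *m rho2 x p].

Definition module_indec (R : pzRingType) (n : nat) (X : seq nat)
  (d : nat) (rho : nat -> seq arrow -> 'M[R]_d) : Prop :=
  (0 < d)%N /\
  forall E : 'M[R]_d,
    (forall x p, epath n X x p -> E *m rho x p = rho x p *m E) ->
    E *m E = E -> E = 0 \/ E = 1%:M.

(* Finite-dimensional modules over the free algebra k<x,y>: pairs of   *)
(* d x d matrices.                                                      *)

Definition kxy_iso (R : pzRingType) (d1 : nat) (X1 Y1 : 'M[R]_d1)
  (d2 : nat) (X2 Y2 : 'M[R]_d2) : Prop :=
  exists (P : 'M[R]_(d1, d2)) (Q : 'M[R]_(d2, d1)),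
    [/\ P *m Q = 1%:M, Q *m P = 1%:M,
        X1 *m P = P *m X2 & Y1 *m P = P *m Y2].

Definition kxy_indec (R : pzRingType) (d : nat) (X Y : 'M[R]_d) : Prop :=
  (0 < d)%N /\
  forall E : 'M[R]_d, E *m X = X *m E -> E *m Y = Y *m E ->
    E *m E = E -> E = 0 \/ E = 1%:M.

(* Noncommutative words in x (= true) and y (= false), evaluated at a *)
(* pair of matrices.                                                   *)
Definition word_eval (R : pzRingType) (d : nat) (w : seq bool)
  (X Y : 'M[R]_d) : 'M[R]_d :=
  foldr (fun (b : bool) M => (if b then X else Y) *m M) 1%:M w.

(* A matrix in M_r(k<x,y>) is represented as a finite formal sum       *)
(* sum_j C_j w_j with C_j in M_r(k) and w_j words.  Its value at a     *)
(* d-dimensional k<x,y>-module (X, Y) is the rd x rd matrix            *)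
(* sum_j C_j (x) w_j(X,Y).                                             *)
Definition ncmx_eval (R : pzRingType) (r d : nat)
  (f : seq (seq bool * 'M[R]_r)) (X Y : 'M[R]_d) : 'M[R]_(r * d) :=
  \sum_(c <- f) tensmx c.2 (word_eval c.1 X Y).

(* Wildness (Drozd): there is an A-k<x,y>-bimodule M which is free of  *)
(* finite rank r as a right k<x,y>-module, such that M (x)_{k<x,y>} -  *)
(* maps indecomposable finite-dimensional k<x,y>-modules to            *)
(* indecomposable A-modules and reflects isomorphism.                  *)
(* Such an M is given by the left action phi : A -> M_r(k<x,y>) of the *)
(* basis paths; M (x) N for N = (X, Y) is then k^r (x) N with the      *)
(* action obtained by evaluating phi at (X, Y).  That phi is an        *)
(* algebra homomorphism is expressed by requiring that every such     *)
(* evaluation is an A-module (equivalent, since no nonzero            *)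
(* noncommutative polynomial vanishes on all matrix algebras).        *)

Definition wild_AnX (R : pzRingType) (n : nat) (X : seq nat) : Prop :=
  exists (r : nat) (phi : nat -> seq arrow -> seq (seq bool * 'M[R]_r)),
    [/\ (forall (d : nat) (Xm Ym : 'M[R]_d),
           is_module n X (fun x p => ncmx_eval (phi x p) Xm Ym)),
        (forall (d : nat) (Xm Ym : 'M[R]_d), kxy_indec Xm Ym ->
           module_indec n X (fun x p => ncmx_eval (phi x p) Xm Ym))
      & (forall (d1 : nat) (X1 Y1 : 'M[R]_d1) (d2 : nat) (X2 Y2 : 'M[R]_d2),
           module_iso n X (fun x p => ncmx_eval (phi x p) X1 Y1)
                          (fun x p => ncmx_eval (phi x p) X2 Y2) ->
           kxy_iso X1 Y1 X2 Y2)].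

From mathcomp Require Import all_boot all_order all_algebra.
From mathcomp Require Import mxtens zify.
Set Implicit Arguments.
Unset Strict Implicit.
Unset Printing Implicit Defensive.
Import GRing.Theory.
Local Open Scope ring_scope.

(* A d-dimensional k<x,y>-module N = (X, Y) is sent to the module k^8 (x) N whose
   top is N + N^2 + N over the vertices 1, 3, m and whose socle is a copy of the
   top.  A nontrivial path acts from the top to the socle, depending only on its
   endpoints and its length: the shortest paths between 1 and 3 (of length two)
   and between 3 and m (of length m - 3) act by identity maps, except that X is
   put on the loop at 1 and Y on one component of the path from 3 to m; all other
   paths act by 0.  Products of two nontrivial paths then act by 0 and paths with
   equal endpoints and length act equally, so the relations hold.
   Conversely, chasing the blocks through these actions shows that a
   homomorphism between two such modules is diag(G, ..., G) up to a map from the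
   top to the socle, where G is a homomorphism of k<x,y>-modules.  This reflects
   isomorphisms; for an idempotent endomorphism, G is an idempotent, hence 0 or 1
   when N is indecomposable, and the top-to-socle part Z satisfies Z = ZG + GZ,
   hence vanishes. *)

Section TensorBlocks.
Variable R : comPzRingType.

Definition tblock {p q a b : nat} (M : 'M[R]_(p * a, q * b)) (s : 'I_p) (t : 'I_q)
  : 'M[R]_(a, b) :=
  \matrix_(i, j) M (mxtens_index (s, i)) (mxtens_index (t, j)).

Lemma tblock_ext p q a b (M N : 'M[R]_(p * a, q * b)) :
  (forall s t, tblock M s t = tblock N s t) -> M = N.
Proof.
move=> eqMN; apply/matrixP=> i j.
case: (mxtens_indexP i) => s k; case: (mxtens_indexP j) => t l.
by have /matrixP/(_ k l) := eqMN s t; rewrite !mxE.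
Qed.

Lemma tblockD p q a b (M N : 'M[R]_(p * a, q * b)) s t :
  tblock (M + N) s t = tblock M s t + tblock N s t.
Proof. by apply/matrixP=> i j; rewrite !mxE. Qed.

Lemma tblock_tens p q a b (A : 'M[R]_(p, q)) (B : 'M[R]_(a, b)) s t :
  tblock (A *t B) s t = A s t *: B.
Proof. by apply/matrixP=> i j; rewrite [LHS]mxE tensmxE [RHS]mxE. Qed.

Lemma tblock_mul p q r a b c (M : 'M[R]_(p * a, q * b)) (N : 'M[R]_(q * b, r * c)) s t :
  tblock (M *m N) s t = \sum_(u < q) tblock M s u *m tblock N u t.
Proof.
apply/matrixP=> i j; rewrite !mxE summxE.
under [RHS]eq_bigr do rewrite mxE.
rewrite pair_big /= (reindex (@mxtens_unindex q b)) /=; last first.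
  by exists (@mxtens_index q b) => z _; rewrite (mxtens_indexK, mxtens_unindexK).
by apply: eq_bigr => w _; rewrite !mxE mxtens_unindexK.
Qed.

Lemma tensmx11 p a : (1%:M : 'M[R]_p) *t (1%:M : 'M[R]_a) = 1%:M.
Proof.
apply/matrixP=> i j.
case: (mxtens_indexP i) => s k; case: (mxtens_indexP j) => t l.
rewrite tensmxE !mxE (can_eq (@mxtens_indexK _ _)) xpair_eqE.
by case: (s == t); case: (k == l); rewrite ?mulr1 ?mulr0 ?mul0r.
Qed.

Lemma tensmxDl p q a b (A B : 'M[R]_(p, q)) (C : 'M[R]_(a, b)) :
  (A + B) *t C = A *t C + B *t C.
Proof. by apply/matrixP=> i j; rewrite !mxE mulrDl. Qed.

Lemma tblock1 p a (s t : 'I_p) : tblock (1%:M : 'M[R]_(p * a)) s t = (s == t)%:R *: 1%:M.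
Proof. by rewrite -tensmx11 tblock_tens mxE. Qed.

Lemma tblock_delta_mull p a b (i j : 'I_p) (A : 'M[R]_a) (P : 'M[R]_(p * a, p * b)) s t :
  tblock ((delta_mx i j *t A) *m P) s t = if s == i then A *m tblock P j t else 0.
Proof.
rewrite tblock_mul (bigD1 j) //= big1 ?addr0; last first.
  by move=> u /negbTE uj; rewrite tblock_tens mxE uj andbF scale0r mul0mx.
by rewrite tblock_tens mxE eqxx andbT; case: (s == i); rewrite ?scale1r ?scale0r ?mul0mx.
Qed.

Lemma tblock_delta_mulr p a b (i j : 'I_p) (B : 'M[R]_b) (P : 'M[R]_(p * a, p * b)) s t :
  tblock (P *m (delta_mx i j *t B)) s t = if t == j then tblock P s i *m B else 0.
Proof.
rewrite tblock_mul (bigD1 i) //= big1 ?addr0; last first.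
  by move=> u /negbTE ui; rewrite tblock_tens mxE ui scale0r mulmx0.
by rewrite tblock_tens mxE eqxx /=; case: (t == j); rewrite ?scale1r ?scale0r ?mulmx0.
Qed.

Lemma tblock_mul_diag_row p a b c (P : 'M[R]_(p * a, p * b)) (Q : 'M[R]_(p * b, p * c)) s G :
  (forall u, tblock P s u = if s == u then G else 0) ->
  forall t, tblock (P *m Q) s t = G *m tblock Q s t.
Proof.
move=> rowP t; rewrite tblock_mul (bigD1 s) //= rowP eqxx big1 ?addr0 // => u /negbTE su.
by rewrite rowP eq_sym su mul0mx.
Qed.

Lemma tblock_comm_delta p a b (i j : 'I_p) (A : 'M[R]_a) (B : 'M[R]_b)
    (P : 'M[R]_(p * a, p * b)) :
  (delta_mx i j *t A) *m P = P *m (delta_mx i j *t B) -> forall s t,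
  (if s == i then A *m tblock P j t else 0) = (if t == j then tblock P s i *m B else 0).
Proof.
by move=> AP s t; rewrite -tblock_delta_mull -tblock_delta_mulr AP.
Qed.

Lemma tblock_comm_delta2 p a b (i j i' j' : 'I_p) (A A' : 'M[R]_a) (B B' : 'M[R]_b)
    (P : 'M[R]_(p * a, p * b)) :
  (delta_mx i j *t A + delta_mx i' j' *t A') *m P =
    P *m (delta_mx i j *t B + delta_mx i' j' *t B') -> forall s t,
  (if s == i then A *m tblock P j t else 0) + (if s == i' then A' *m tblock P j' t else 0) =
  (if t == j then tblock P s i *m B else 0) + (if t == j' then tblock P s i' *m B' else 0).
Proof.
move=> AP s t; rewrite -!tblock_delta_mull -!tblock_delta_mulr -!tblockD.
by rewrite -mulmxDl -mulmxDr AP.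
Qed.

Lemma tblock_comm_delta1 p a b (i j : 'I_p) (P : 'M[R]_(p * a, p * b)) :
  (delta_mx i j *t 1%:M) *m P = P *m (delta_mx i j *t 1%:M) ->
  (forall t, tblock P j t = if t == j then tblock P i i else 0) /\
  (forall s, tblock P s i = if s == i then tblock P j j else 0).
Proof.
move/tblock_comm_delta=> comm; split=> [t | s].
  by have := comm i t; rewrite eqxx mul1mx => ->; case: ifP; rewrite ?mulmx1.
by have := comm s j; rewrite eqxx mulmx1 => <-; case: ifP; rewrite ?mul1mx.
Qed.

End TensorBlocks.

Section NcEval.
Variables (R : pzRingType) (r d : nat) (X Y : 'M[R]_d).

Lemma ncmx_eval_seq1 c : ncmx_eval [:: c] X Y = c.2 *t word_eval c.1 X Y :> 'M_(r * d).
Proof. by rewrite /ncmx_eval big_seq1. Qed.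

Lemma ncmx_eval_seq2 c c' :
  ncmx_eval [:: c; c'] X Y =
    c.2 *t word_eval c.1 X Y + c'.2 *t word_eval c'.1 X Y :> 'M_(r * d).
Proof. by rewrite /ncmx_eval big_cons big_seq1. Qed.

End NcEval.

Lemma path_end_cat x p q : path_end x (p ++ q) = path_end (path_end x p) q.
Proof. by elim: p x => [|al p IHp] x //=. Qed.

Lemma wf_path_dist n x p : wf_path n x p ->
  (x - path_end x p + (path_end x p - x) <= size p)%N.
Proof.
elim: p x => [|[[] i] p IHp] x /=; first by rewrite !subnn.
all: by move=> /and3P [_ /eqP xi /IHp]; rewrite /arr_src /arr_tgt /= in xi *; lia.
Qed.

Lemma wf_path_widen n n' x p : (n <= n')%N -> wf_path n x p -> wf_path n' x p.
Proof.
move=> lenn'; elim: p x => [|al p IHp] x /=; first by move=> /andP [le1x lexn]; lia.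
by move=> /and3P [al_n -> /IHp ->]; move: al_n; rewrite /arrow_of /= andbT; lia.
Qed.

Lemma epath_widen n n' V x p : (n <= n')%N -> epath n V x p -> epath n' V x p.
Proof. by move=> lenn' /and3P [/(wf_path_widen lenn') ? ? ?]; apply/and3P. Qed.

Lemma wf_path_size_ge2 m n x p : (4 < m)%N -> wf_path n x p -> p != [::] ->
  x \in [:: 1%N; 3%N; m] -> path_end x p \in [:: 1%N; 3%N; m] -> (2 <= size p)%N.
Proof.
move=> lt4m; case: p => [|[[] i] [|al p]] //= /and3P [_ /eqP xi _] _;
  rewrite /arr_src /arr_tgt /= in xi *; rewrite !inE; lia.
Qed.

Fixpoint up_path (i k : nat) : seq arrow :=
  if k is k'.+1 then a_ i :: up_path i.+1 k' else [::].

Fixpoint down_path (i k : nat) : seq arrow :=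
  if k is k'.+1 then b_ i.-1 :: down_path i.-1 k' else [::].

Lemma up_path_end i k : path_end i (up_path i k) = (i + k)%N.
Proof. by elim: k i => [|k IHk] i /=; rewrite ?addn0 // IHk addSnnS. Qed.

Lemma size_up_path i k : size (up_path i k) = k.
Proof. by elim: k i => [|k IHk] i //=; rewrite IHk. Qed.

Lemma wf_up_path n i k : (1 <= i)%N -> (i + k <= n)%N -> wf_path n i (up_path i k).
Proof.
elim: k i => [|k IHk] i le1i leikn /=; first by apply/andP; split => //; lia.
apply/and3P; split; rewrite /arrow_of /arr_src /arr_tgt /= ?eqxx //; last by apply: IHk; lia.
by apply/andP; split => //; lia.
Qed.

Lemma down_path_end i k : (k <= i)%N -> path_end i (down_path i k) = (i - k)%N.
Proof. by elim: k i => [|k IHk] i leki /=; rewrite ?subn0 // /arr_tgt /= IHk; lia. Qed.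

Lemma size_down_path i k : size (down_path i k) = k.
Proof. by elim: k i => [|k IHk] i //=; rewrite IHk. Qed.

Lemma wf_down_path n i k : (k < i)%N -> (i <= n)%N -> wf_path n i (down_path i k).
Proof.
elim: k i => [|k IHk] i ltki lein /=; first by apply/andP; split => //; lia.
apply/and3P; split; rewrite /arrow_of /arr_src /arr_tgt /=; last by apply: IHk; lia.
  by apply/andP; split; lia.
by apply/eqP; lia.
Qed.

(* Blocks [o0..o3] form the top of the module, lying over the vertices 1, 3, 3, m,
   and [o4..o7] its socle, a second copy of the top. *)
Definition o0 : 'I_8 := @Ordinal 8 0 isT.
Definition o1 : 'I_8 := @Ordinal 8 1 isT.
Definition o2 : 'I_8 := @Ordinal 8 2 isT.
Definition o3 : 'I_8 := @Ordinal 8 3 isT.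
Definition o4 : 'I_8 := @Ordinal 8 4 isT.
Definition o5 : 'I_8 := @Ordinal 8 5 isT.
Definition o6 : 'I_8 := @Ordinal 8 6 isT.
Definition o7 : 'I_8 := @Ordinal 8 7 isT.

Lemma ord8_ind (Q : 'I_8 -> Prop) :
  Q o0 -> Q o1 -> Q o2 -> Q o3 -> Q o4 -> Q o5 -> Q o6 -> Q o7 -> forall s, Q s.
Proof.
move=> Q0 Q1 Q2 Q3 Q4 Q5 Q6 Q7 [[|[|[|[|[|[|[|[|s]]]]]]]] lt_s8] //;
  by rewrite (eq_irrelevance lt_s8 isT).
Qed.

Section DiagModRad.
Variable R : comPzRingType.

(* Away from the blocks mapping the top into the socle, P is diag(G, ..., G). *)
Definition diag_mod_rad a b (P : 'M[R]_(8 * a, 8 * b)) (G : 'M[R]_(a, b)) :=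
  forall s t : 'I_8, ((s < 4) || (4 <= t))%N -> tblock P s t = if s == t then G else 0.

Lemma diag_mod_rad_mul00 a b c (P : 'M[R]_(8 * a, 8 * b)) (Q : 'M[R]_(8 * b, 8 * c)) G H :
  diag_mod_rad P G -> diag_mod_rad Q H -> tblock (P *m Q) o0 o0 = G *m H.
Proof.
by move=> PG QH; rewrite (tblock_mul_diag_row _ (fun u => PG o0 u isT)) QH.
Qed.

Lemma diag_mod_rad_inv a b (P : 'M[R]_(8 * a, 8 * b)) (Q : 'M[R]_(8 * b, 8 * a)) G H :
  diag_mod_rad P G -> diag_mod_rad Q H -> P *m Q = 1%:M -> G *m H = 1%:M.
Proof. by move=> PG QH PQ; rewrite -(diag_mod_rad_mul00 PG QH) PQ tblock1 scale1r. Qed.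

Lemma diag_mod_radE a b (P : 'M[R]_(8 * a, 8 * b)) G :
  diag_mod_rad P G -> (forall s t : 'I_8, (4 <= s)%N -> (t < 4)%N -> tblock P s t = 0) ->
  P = 1%:M *t G.
Proof.
move=> PG rad0; apply: tblock_ext => s t; rewrite tblock_tens mxE.
have [/andP [le4s ltt4]|] := boolP ((4 <= s) && (t < 4))%N.
  have -> : (s == t) = false by apply/eqP => st; move: le4s ltt4; rewrite st; lia.
  by rewrite rad0 // scale0r.
rewrite negb_and -ltnNge -leqNgt => /PG ->.
by case: (s == t); rewrite ?scale1r ?scale0r.
Qed.

Section Idempotent.
Variables (a : nat) (E : 'M[R]_(8 * a)) (G : 'M[R]_a).
Hypotheses (EG : diag_mod_rad E G) (idemE : E *m E = E).

Lemma diag_mod_rad_idem : G *m G = G.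
Proof. by rewrite -(diag_mod_rad_mul00 EG EG) idemE EG. Qed.

Lemma diag_mod_rad_idem_rad (s t : 'I_8) : (4 <= s)%N -> (t < 4)%N ->
  tblock E s t = tblock E s t *m G + G *m tblock E s t.
Proof.
move=> le4s ltt4; have st : s != t by apply/eqP => st; move: le4s ltt4; rewrite st; lia.
rewrite -{1}idemE tblock_mul (bigD1 t) //= (bigD1 s st) /= big1 ?addr0; last first.
  move=> u /andP [ut us]; have [ltu4|le4u] := ltnP u 4.
    by rewrite (EG (s := u) (t := t)) ?ltu4 // (negbTE ut) mulmx0.
  by rewrite (EG (s := s) (t := u)) ?le4u ?orbT // eq_sym (negbTE us) mul0mx.
by rewrite (EG (s := t) (t := t)) ?ltt4 // (EG (s := s) (t := s)) ?le4s ?orbT // !eqxx.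
Qed.

Lemma diag_mod_rad_idem_trivial : G = 0 \/ G = 1%:M -> E = 0 \/ E = 1%:M.
Proof.
move=> G01; rewrite (diag_mod_radE EG) => [|s t le4s ltt4].
  by case: G01 => ->; [left; rewrite tensmx0 | right; rewrite tensmx11].
have := diag_mod_rad_idem_rad le4s ltt4; case: G01 => ->.
  by rewrite mulmx0 mul0mx addr0.
by rewrite mulmx1 mul1mx => /(congr1 (fun Z => Z - tblock E s t)); rewrite addrK subrr.
Qed.

End Idempotent.

End DiagModRad.

Section Construction.
Variables (F : comPzRingType) (m : nat).

Definition block_vertex (i : 'I_8) : nat :=
  match val i with 0 | 4 => 1 | 1 | 2 | 5 | 6 => 3 | _ => m end.

Definition vertex_idem (x : nat) : 'M[F]_8 :=
  \matrix_(i, j) ((i == j) && (block_vertex i == x))%:R.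

(* The coefficient in M_8(k<x,y>) of every nontrivial path of length l from the
   vertex x to the vertex z. *)
Definition path_coef (x z l : nat) : seq (seq bool * 'M[F]_8) :=
  if [&& x == 1, z == 1 & l == 2]%N then [:: ([:: true], delta_mx o4 o0)]
  else if [&& x == 1, z == 3 & l == 2]%N then [:: ([::], delta_mx o5 o0)]
  else if [&& x == 3, z == 1 & l == 2]%N then
    [:: ([::], delta_mx o4 o1); ([::], delta_mx o4 o2)]
  else if [&& x == 3, z == 3 & l == 2]%N then
    [:: ([::], delta_mx o5 o1); ([::], delta_mx o6 o2)]
  else if [&& x == 3, z == m & l == m - 3]%N then
    [:: ([::], delta_mx o7 o1); ([:: false], delta_mx o7 o2)]
  else if [&& x == m, z == 3 & l == m - 3]%N then [:: ([::], delta_mx o6 o3)]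
  else [::].

Definition path_action (x : nat) (p : seq arrow) : seq (seq bool * 'M[F]_8) :=
  if p is [::] then [:: ([::], vertex_idem x)]
  else path_coef x (path_end x p) (size p).

Definition socle_top (z x : nat) (C : 'M[F]_8) :=
  forall i j, C i j != 0 ->
    [&& block_vertex i == z, block_vertex j == x, (4 <= i)%N & (j < 4)%N].

Lemma socle_top_delta (z x : nat) (i j : 'I_8) :
  block_vertex i == z -> block_vertex j == x -> (4 <= i)%N -> (j < 4)%N ->
  socle_top z x (delta_mx i j).
Proof.
move=> iz jx le4i ltj4 i' j'; rewrite mxE.
by case: (i' =P i) => [->|]; case: (j' =P j) => [->|] //=; rewrite ?iz ?jx ?le4i ?ltj4 // eqxx.
Qed.

Lemma path_coef_socle_top (x z l : nat) c : c \in path_coef x z l -> socle_top z x c.2.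
Proof.
rewrite /path_coef.
do 6 (case: ifP => [/and3P [/eqP -> /eqP -> _]|_];
  first by rewrite !inE; (case/orP || idtac); move=> /eqP ->; apply: socle_top_delta).
by [].
Qed.

Lemma socle_top_mul0 (z x z' x' : nat) (C D : 'M[F]_8) :
  socle_top z x C -> socle_top z' x' D -> C *m D = 0.
Proof.
move=> suppC suppD; apply/matrixP=> i j; rewrite !mxE big1 // => u _.
have [->|Ciu] := eqVneq (C i u) 0; first by rewrite mul0r.
have [->|Duj] := eqVneq (D u j) 0; first by rewrite mulr0.
by move: (suppC _ _ Ciu) (suppD _ _ Duj) => /and4P [_ _ _ ltu4] /and4P [_ _ le4u _]; lia.
Qed.

Lemma vertex_idem_mull (y z x : nat) (C : 'M[F]_8) :
  socle_top z x C -> vertex_idem y *m C = if z == y then C else 0.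
Proof.
move=> suppC; apply/matrixP=> i j; rewrite !mxE (bigD1 i) //= big1 ?addr0; last first.
  by move=> u /negbTE iu; rewrite mxE eq_sym iu mul0r.
rewrite mxE eqxx /=.
have [Cij|nzCij] := eqVneq (C i j) 0.
  by rewrite Cij mulr0; case: (z == y); rewrite ?mxE ?Cij.
move: (suppC _ _ nzCij) => /and4P [/eqP -> _ _ _].
by case: (z == y); rewrite /= ?mxE ?mul1r ?mul0r.
Qed.

Lemma vertex_idem_mulr (y z x : nat) (C : 'M[F]_8) :
  socle_top z x C -> C *m vertex_idem y = if x == y then C else 0.
Proof.
move=> suppC; apply/matrixP=> i j; rewrite !mxE (bigD1 j) //= big1 ?addr0; last first.
  by move=> u /negbTE uj; rewrite mxE uj mulr0.
rewrite mxE eqxx /=.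
have [Cij|nzCij] := eqVneq (C i j) 0.
  by rewrite Cij mul0r; case: (x == y); rewrite ?mxE ?Cij.
move: (suppC _ _ nzCij) => /and4P [_ /eqP -> _ _].
by case: (x == y); rewrite /= ?mxE ?mulr1 ?mulr0.
Qed.

Lemma vertex_idem_mul (x y : nat) :
  vertex_idem y *m vertex_idem x = if x == y then vertex_idem x else 0.
Proof.
apply/matrixP=> i j; rewrite !mxE (bigD1 i) //= big1 ?addr0; last first.
  by move=> u /negbTE iu; rewrite mxE eq_sym iu mul0r.
rewrite !mxE eqxx /=.
have [<-|neq_xy] := eqVneq x y.
  by rewrite mxE; case: (i == j); case: (block_vertex i == x); rewrite ?mulr1 ?mulr0.
rewrite mxE; have [iy|] := eqVneq (block_vertex i) y; last by rewrite mul0r.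
have [ix|] := eqVneq (block_vertex i) x; last by rewrite andbF mulr0.
by move: neq_xy; rewrite -iy -ix eqxx.
Qed.

Lemma vertex_idem_sum : (4 < m)%N ->
  vertex_idem 1 + vertex_idem 3 + vertex_idem m = 1%:M.
Proof.
move=> lt4m; have [m1 m3] : (m == 1)%N = false /\ (m == 3)%N = false by split; apply/eqP; lia.
apply/matrixP=> i j; rewrite !mxE; case: (i == j); rewrite /= ?addr0 //.
move: i; apply: ord8_ind; rewrite /block_vertex /= ?m1 ?m3 ?eqxx /= ?addr0 ?add0r //.
all: by rewrite eq_sym ?m1 ?m3 addr0.
Qed.

Lemma path_action_cons x p :
  p != [::] -> path_action x p = path_coef x (path_end x p) (size p).
Proof. by case: p. Qed.

Lemma path_coef_cat_nil (x y z l1 l2 : nat) : (4 < m)%N ->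
  x \in [:: 1%N; 3%N; m] -> y \in [:: 1%N; 3%N; m] -> z \in [:: 1%N; 3%N; m] ->
  (2 <= l1)%N -> (2 <= l2)%N ->
  (x - y + (y - x) <= l1)%N -> (y - z + (z - y) <= l2)%N ->
  path_coef x z (l1 + l2) = [::].
Proof.
rewrite !inE /path_coef => *.
by do 6 (case: ifP => [/and3P [/eqP ? /eqP ? /eqP ?]|_]; first by lia).
Qed.

Lemma path_coef_far_nil (n x z l : nat) : (4 < m)%N -> (m <= n)%N ->
  x \in [:: 1%N; 3%N; m] -> z \in [:: 1%N; 3%N; m] ->
  (n - x + 2 + (n - z) <= l)%N -> path_coef x z l = [::].
Proof.
rewrite !inE /path_coef => *.
by do 6 (case: ifP => [/and3P [/eqP ? /eqP ? /eqP ?]|_]; first by lia).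
Qed.

Section Evaluation.
Variables (d : nat) (X Y : 'M[F]_d).
Local Notation eval f := (ncmx_eval f X Y).

Lemma eval_path_action_nil x : eval (path_action x [::]) = vertex_idem x *t 1%:M.
Proof. exact: ncmx_eval_seq1. Qed.

Lemma eval_path_coef_mul0 x z l x' z' l' :
  eval (path_coef x z l) *m eval (path_coef x' z' l') = 0.
Proof.
rewrite /ncmx_eval mulmx_suml big1_seq // => c /path_coef_socle_top c_top.
rewrite mulmx_sumr big1_seq // => c' /path_coef_socle_top c'_top.
by rewrite tensmx_mul (socle_top_mul0 c_top c'_top) tens0mx.
Qed.

Lemma eval_path_coef_idem_mull y x z l :
  (vertex_idem y *t 1%:M) *m eval (path_coef x z l) =
  if z == y then eval (path_coef x z l) else 0.
Proof.
rewrite /ncmx_eval mulmx_sumr; case: ifP => zy; [apply: eq_big_seq | apply: big1_seq].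
all: move=> c /path_coef_socle_top c_top.
all: by rewrite tensmx_mul mul1mx (vertex_idem_mull _ c_top) zy ?tens0mx.
Qed.

Lemma eval_path_coef_idem_mulr y x z l :
  eval (path_coef x z l) *m (vertex_idem y *t 1%:M) =
  if x == y then eval (path_coef x z l) else 0.
Proof.
rewrite /ncmx_eval mulmx_suml; case: ifP => xy; [apply: eq_big_seq | apply: big1_seq].
all: move=> c /path_coef_socle_top c_top.
all: by rewrite tensmx_mul mulmx1 (vertex_idem_mulr _ c_top) xy ?tens0mx.
Qed.

End Evaluation.

Section ModuleAxioms.
Variables (n d : nat) (X Y : 'M[F]_d).
Hypotheses (lt4m : (4 < m)%N) (lemn : (m <= n)%N).
Local Notation rho x p := (ncmx_eval (path_action x p) X Y).

Lemma path_action_unital : \sum_(x <- undup (Vset [:: 3%N; m])) rho x [::] = 1%:M.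
Proof.
have [m1 m3] : (1 == m)%N = false /\ (3 == m)%N = false by split; apply/eqP; lia.
rewrite /Vset /= !inE m1 m3 /= !big_cons big_nil addr0 !eval_path_action_nil.
by rewrite -!tensmxDl addrA vertex_idem_sum // tensmx11.
Qed.

Lemma path_action_mul x q y p :
  epath n [:: 3%N; m] x q -> epath n [:: 3%N; m] y p ->
  rho y p *m rho x q = if path_end x q == y then rho x (q ++ p) else 0.
Proof.
move=> /and3P [wf_q xV qV] /and3P [wf_p yV pV].
case: q wf_q qV => [|al q] wf_q qV; case: p wf_p pV => [|bl p] wf_p pV.
- rewrite !eval_path_action_nil tensmx_mul mul1mx vertex_idem_mul.
  by case: (x == y); rewrite ?tens0mx.
- by rewrite eval_path_action_nil eval_path_coef_idem_mulr eq_sym; case: eqP => [->|].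
- by rewrite eval_path_action_nil eval_path_coef_idem_mull cats0.
rewrite eval_path_coef_mul0; case: eqP => // qy.
rewrite path_action_cons // path_end_cat qy size_cat.
rewrite (@path_coef_cat_nil x y) /ncmx_eval ?big_nil //.
- exact: (wf_path_size_ge2 lt4m wf_q isT xV qV).
- exact: (wf_path_size_ge2 lt4m wf_p isT yV pV).
- by have := wf_path_dist wf_q; rewrite qy.
exact: wf_path_dist wf_p.
Qed.

(* The two sides of a commutativity relation have the same endpoints and length,
   and the zero relation only occurs in paths too long to act. *)
Lemma path_action_relations s rel : (s, rel) \in relations F n ->
  forall x v u, wf_path n x v -> path_end x v = s -> wf_path n s u ->
    x \in Vset [:: 3%N; m] -> path_end s u \in Vset [:: 3%N; m] ->
    \sum_(c <- rel) c.1 *: rho x (v ++ c.2 ++ u) = 0.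
Proof.
move=> rel_in x v u wf_v vs wf_u xV uV.
move: rel_in; rewrite mem_cat => /orP [/mapP [i _ [_ ->]] | ].
  rewrite !big_cons big_nil addr0 /= !path_action_cons; try by case: v {wf_v vs}.
  by rewrite !path_end_cat vs /= !size_cat /= scale1r scaleN1r subrr.
rewrite mem_seq1 => /eqP [sn rel_eq]; rewrite {}sn in vs wf_u uV; rewrite {}rel_eq.
rewrite big_seq1 /= scale1r path_action_cons; last by case: v {wf_v vs}.
rewrite !path_end_cat vs /= /arr_tgt /= prednK; last by lia.
rewrite !size_cat /= (@path_coef_far_nil n) /ncmx_eval ?big_nil //.
have := wf_path_dist wf_v; have := wf_path_dist wf_u; rewrite vs.
by move: (path_end n u) (size u) (size v) => z su sv; lia.
Qed.

End ModuleAxioms.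

Lemma path_action_is_module n d (X Y : 'M[F]_d) : (4 < m)%N -> (m <= n)%N ->
  is_module n [:: 3%N; m] (fun x p => ncmx_eval (path_action x p) X Y).
Proof.
move=> lt4m lemn; split; first exact: path_action_unital.
  exact: path_action_mul.
exact: path_action_relations.
Qed.

Section Intertwiner.
Variables (n d1 d2 : nat) (X1 Y1 : 'M[F]_d1) (X2 Y2 : 'M[F]_d2).
Variable P : 'M[F]_(8 * d1, 8 * d2).
Hypotheses (lt4m : (4 < m)%N) (lemn : (m <= n)%N).
Hypothesis intertwines : forall x p, epath n [:: 3%N; m] x p ->
  ncmx_eval (path_action x p) X1 Y1 *m P = P *m ncmx_eval (path_action x p) X2 Y2.

(* The paths of length two used below are already paths of A_5. *)
Let intertwines_short x p : epath 5 [:: 3%N; m] x p ->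
  ncmx_eval (path_action x p) X1 Y1 *m P = P *m ncmx_eval (path_action x p) X2 Y2.
Proof. by move=> /epath_widen e5; apply/intertwines/e5; lia. Qed.

Let comm_loop1 : (delta_mx o4 o0 *t X1) *m P = P *m (delta_mx o4 o0 *t X2).
Proof.
have := @intertwines_short 1 [:: a_ 1; b_ 1] isT.
by rewrite /= !ncmx_eval_seq1 /= !mulmx1.
Qed.

Let comm_13 : (delta_mx o5 o0 *t 1%:M) *m P = P *m (delta_mx o5 o0 *t 1%:M).
Proof. by have := @intertwines_short 1 [:: a_ 1; a_ 2] isT; rewrite /= !ncmx_eval_seq1. Qed.

Let comm_31 :
  (delta_mx o4 o1 *t 1%:M + delta_mx o4 o2 *t 1%:M) *m P =
  P *m (delta_mx o4 o1 *t 1%:M + delta_mx o4 o2 *t 1%:M).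
Proof. by have := @intertwines_short 3 [:: b_ 2; b_ 1] isT; rewrite /= !ncmx_eval_seq2. Qed.

Let comm_33 :
  (delta_mx o5 o1 *t 1%:M + delta_mx o6 o2 *t 1%:M) *m P =
  P *m (delta_mx o5 o1 *t 1%:M + delta_mx o6 o2 *t 1%:M).
Proof. by have := @intertwines_short 3 [:: b_ 2; a_ 2] isT; rewrite /= !ncmx_eval_seq2. Qed.

Let m1 : (m == 1)%N = false. Proof. by apply/eqP; lia. Qed.
Let m3 : (m == 3)%N = false. Proof. by apply/eqP; lia. Qed.

Let comm_3m :
  (delta_mx o7 o1 *t 1%:M + delta_mx o7 o2 *t Y1) *m P =
  P *m (delta_mx o7 o1 *t 1%:M + delta_mx o7 o2 *t Y2).
Proof.
have e : epath n [:: 3%N; m] 3 (up_path 3 (m - 3)).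
  by rewrite /epath wf_up_path ?up_path_end ?subnKC ?inE ?eqxx ?orbT //; lia.
have := intertwines e; rewrite path_action_cons; last by rewrite -size_eq0 size_up_path; lia.
rewrite up_path_end subnKC; last by lia.
by rewrite size_up_path /path_coef m1 m3 !eqxx /= !ncmx_eval_seq2 /= !mulmx1.
Qed.

Let comm_m3 : (delta_mx o6 o3 *t 1%:M) *m P = P *m (delta_mx o6 o3 *t 1%:M).
Proof.
have e : epath n [:: 3%N; m] m (down_path m (m - 3)).
  by rewrite /epath wf_down_path ?down_path_end ?subKn ?inE ?eqxx ?orbT //; lia.
have := intertwines e; rewrite path_action_cons; last by rewrite -size_eq0 size_down_path; lia.
rewrite down_path_end ?leq_subr // subKn; last by lia.
by rewrite size_down_path /path_coef m1 m3 !eqxx /= !ncmx_eval_seq1.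
Qed.

Let row0 := (tblock_comm_delta1 comm_13).1.
Let col5 := (tblock_comm_delta1 comm_13).2.
Let row3 := (tblock_comm_delta1 comm_m3).1.
Let col6 := (tblock_comm_delta1 comm_m3).2.

Let row1 t : tblock P o1 t = if t == o1 then tblock P o5 o5 else 0.
Proof.
have := tblock_comm_delta2 comm_33 o5 t; rewrite /= mul1mx addr0 !mulmx1 col6 /= => ->.
by case: (t == o1); case: (t == o2); rewrite ?addr0.
Qed.

Let row2 t : tblock P o2 t = if t == o2 then tblock P o6 o6 else 0.
Proof.
have := tblock_comm_delta2 comm_33 o6 t; rewrite /= mul1mx add0r !mulmx1 col5 /= => ->.
by case: (t == o1); case: (t == o2); rewrite ?add0r.
Qed.

Let col4 s : tblock P s o4 = if s == o4 then tblock P o5 o5 else 0.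
Proof.
have := tblock_comm_delta2 comm_31 s o1; rewrite /= addr0 mulmx1 row1 row2 /= => <-.
by case: (s == o4); rewrite ?mul1mx ?addr0.
Qed.

Let blk66 : tblock P o6 o6 = tblock P o5 o5.
Proof.
have := tblock_comm_delta2 comm_31 o4 o2.
by rewrite /= !mul1mx mulmx1 row1 row2 col4 /= !add0r.
Qed.

Let col7 s : tblock P s o7 = if s == o7 then tblock P o5 o5 else 0.
Proof.
have := tblock_comm_delta2 comm_3m s o1; rewrite /= addr0 mulmx1 row1 row2 /=.
by case: (s == o7); rewrite ?mul1mx ?mulmx0 ?addr0 => <-.
Qed.

Lemma intertwiner_diag_mod_rad : diag_mod_rad P (tblock P o5 o5).
Proof.
move=> s t /orP [lts4 | le4t].
  by move: s lts4; apply: ord8_ind => //= _; rewrite ?row0 ?row1 ?row2 ?row3 ?blk66 eq_sym.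
by move: t le4t; apply: ord8_ind => //= _; rewrite ?col4 ?col5 ?col6 ?col7 ?row0 ?row3 ?blk66.
Qed.

Lemma intertwiner_commX : X1 *m tblock P o5 o5 = tblock P o5 o5 *m X2.
Proof. by have := tblock_comm_delta comm_loop1 o4 o0; rewrite /= row0 col4. Qed.

Lemma intertwiner_commY : Y1 *m tblock P o5 o5 = tblock P o5 o5 *m Y2.
Proof.
have := tblock_comm_delta2 comm_3m o7 o2.
by rewrite /= mul1mx add0r row1 row2 col7 /= add0r blk66.
Qed.

End Intertwiner.

End Construction.

Section Wildness.
Variables (F : comPzRingType) (m n : nat).
Hypotheses (lt4m : (4 < m)%N) (lemn : (m <= n)%N).
Local Notation rho X Y := (fun x p => ncmx_eval (path_action F m x p) X Y).

Lemma path_action_indec d (X Y : 'M[F]_d) :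
  kxy_indec X Y -> module_indec n [:: 3%N; m] (rho X Y).
Proof.
move=> [d_gt0 indecXY]; split; first by rewrite muln_gt0.
move=> E commE idemE.
have intE x p : epath n [:: 3%N; m] x p -> rho X Y x p *m E = E *m rho X Y x p.
  by move=> e; rewrite commE.
have EG := intertwiner_diag_mod_rad lt4m lemn intE.
apply: (diag_mod_rad_idem_trivial EG idemE); apply: indecXY.
- exact/esym/(intertwiner_commX lt4m lemn intE).
- exact/esym/(intertwiner_commY lt4m lemn intE).
exact: diag_mod_rad_idem EG idemE.
Qed.

Lemma path_action_iso d1 (X1 Y1 : 'M[F]_d1) d2 (X2 Y2 : 'M[F]_d2) :
  module_iso n [:: 3%N; m] (rho X1 Y1) (rho X2 Y2) -> kxy_iso X1 Y1 X2 Y2.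
Proof.
move=> [P [Q [PQ QP intP]]].
have intQ x p : epath n [:: 3%N; m] x p -> rho X2 Y2 x p *m Q = Q *m rho X1 Y1 x p.
  move=> e; rewrite -[RHS]mulmx1 -PQ [RHS]mulmxA -(mulmxA Q) (intP _ _ e).
  by rewrite (mulmxA Q P) QP mul1mx.
have PG := intertwiner_diag_mod_rad lt4m lemn intP.
have QH := intertwiner_diag_mod_rad lt4m lemn intQ.
exists (tblock P o5 o5), (tblock Q o5 o5); split.
- exact: diag_mod_rad_inv PG QH PQ.
- exact: diag_mod_rad_inv QH PG QP.
- exact: intertwiner_commX lt4m lemn intP.
exact: intertwiner_commY lt4m lemn intP.
Qed.

End Wildness.

Theorem lemma2 (k : closedFieldType) (m n : nat) :
  (4 < m)%N -> (m <= n)%N -> wild_AnX k n [:: 3%N; m].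
Proof.
move=> lt4m lemn; exists 8%N, (path_action k m); split.
- by move=> d X Y; apply: path_action_is_module.
- by move=> d X Y; apply: path_action_indec.
by move=> d1 X1 Y1 d2 X2 Y2; apply: path_action_iso.
Qed.
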